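(* Let $m,n\in\mathbb{N}$, $\varepsilon\in\mathbb{R}$, $\bar g=-4\,du\,dv+\bar\rho^2\mathring\gamma_{\mathbb{S}^{n-1}}-\tau^2\mathring\gamma_{\mathbb{S}^{m-1}}$ with $\bar\rho=r+2\varepsilon f$. Define on $\mathfrak{D}=\{f>0\}$ \[ \bar h:=\frac12+\frac{\varepsilon f}{2\bar\rho},\qquad \bar\pi:=\bar\nabla^2f-\bar h\,\bar g,\qquad \bar w:=\frac12\bar\square f-\bar h=\frac{n+m-2}{4}+\frac{(n-2)\varepsilon f}{2\bar\rho}, \] and $T:=\tfrac12 f^{-1/2}(-u\partial_u+v\partial_v)$, $N:=\tfrac12 f^{-1/2}(u\partial_u+v\partial_v)$. Then, with respect to the frame consisting of $T$, $N$, the spatial angular coordinate directions (indices $a,b$) and the temporal angular coordinate directions (indices $C,D$), the nonzero components of $\bar\pi$ are \[ \bar\pi_{TT}=\frac{\varepsilon f}{2\bar\rho},\qquad \bar\pi_{ab}=\frac{\varepsilon f}{2\bar\rho}\bar g_{ab},\qquad \bar\pi_{CD}=-\frac{\varepsilon f}{2\bar\rho}\bar g_{CD},\qquad \bar\pi_{NN}=-\frac{\varepsilon f}{2\bar\rho}. \] Moreover \[ \bar\square\bar w=-\frac{(n-2)\varepsilon}{2\bar\rho}\left[\frac{(n-3)f}{\bar\rho^2}-\frac{(n+m-2)r}{2\bar\rho}\right]. \]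
   Context: On $\mathbb{R}^{m+n}$ with Cartesian coordinates $t\in\mathbb{R}^m$, $x\in\mathbb{R}^n$: $r=|x|$, $\tau=|t|$, $u=\frac12(\tau-r)$, $v=\frac12(\tau+r)$, $f=-uv=\frac14(|x|^2-|t|^2)$. On $\{\tau\ne0,r\ne0\}$ one uses coordinates $(u,v,\omega_x,\omega_t)$ with $\omega_x\in\mathbb{S}^{n-1}$, $\omega_t\in\mathbb{S}^{m-1}$; $\partial_u,\partial_v$ are the coordinate vector fields; $a,b$ index local coordinates on $\mathbb{S}^{n-1}$ and $C,D$ local coordinates on $\mathbb{S}^{m-1}$; $\mathring\gamma$ denotes unit round metrics. $\bar\nabla$ is the Levi-Civita connection of $\bar g$, $\bar\nabla^2f$ the Hessian, $\bar\square=\bar g^{\alpha\beta}\bar\nabla_{\alpha\beta}$. *)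

From Stdlib Require Import Reals.
From Coquelicot Require Import Coquelicot.
From mathcomp Require Import all_boot all_order all_algebra.
From mathcomp Require Import Rstruct.
Set Implicit Arguments. Unset Strict Implicit. Unset Printing Implicit Defensive.
Import Order.TTheory GRing.Theory Num.Theory.
Local Open Scope ring_scope.

Definition upd (N : nat) (x : 'I_N -> R) (i : 'I_N) (t : R) : 'I_N -> R :=
  fun k => if k == i then t else x k.

Definition pder (N : nat) (i : 'I_N) (F : ('I_N -> R) -> R) (x : 'I_N -> R) : R :=
  Derive (fun t => F (upd x i t)) (x i).

Definition metric (N : nat) := ('I_N -> R) -> 'I_N -> 'I_N -> R.

Definition ginv (N : nat) (g : metric N) (x : 'I_N -> R) : 'M[R]_N :=
  invmx (\matrix_(i, j) g x i j).

Definition christoffel (N : nat) (g : metric N) (x : 'I_N -> R) (k i j : 'I_N) : R :=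
  2^-1 * \sum_(l < N) ginv g x k l *
     (pder i (fun y => g y j l) x + pder j (fun y => g y i l) x
      - pder l (fun y => g y i j) x).

Definition hess (N : nat) (g : metric N) (F : ('I_N -> R) -> R) (x : 'I_N -> R)
  (i j : 'I_N) : R :=
  pder i (pder j F) x - \sum_(k < N) christoffel g x k i j * pder k F x.

Definition box (N : nat) (g : metric N) (F : ('I_N -> R) -> R) (x : 'I_N -> R) : R :=
  \sum_(i < N) \sum_(j < N) ginv g x i j * hess g F x i j.

Definition bil (N : nat) (B : 'I_N -> 'I_N -> R) (X Y : 'I_N -> R) : R :=
  \sum_(i < N) \sum_(j < N) B i j * X i * Y j.

Definition cvec (N : nat) (i : 'I_N) : 'I_N -> R := fun k => if k == i then 1 else 0.

(* Coordinates (u, v, y_1..y_{n-1}, z_1..z_{m-1}) where y (resp. z) are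
   stereographic coordinates on S^{n-1} (resp. S^{m-1}), in which the unit
   round metric is 4 |dy|^2 / (1 + |y|^2)^2.  Index layout in 'I_N with
   N = (n-1)+(m-1)+2 :  0 = u, 1 = v, 2 <= i < n+1 : y_{i-2},
   n+1 <= i : z_{i-n-1}. *)

Definition dimN (n m : nat) : nat := (n.-1 + m.-1).+2.

Definition isY (n m : nat) (i : 'I_(dimN n m)) : bool := (2 <= i < n.-1 + 2)%N.
Definition isZ (n m : nat) (i : 'I_(dimN n m)) : bool := (n.-1 + 2 <= i)%N.

Definition ucoord (n m : nat) (x : 'I_(dimN n m) -> R) : R := x (inord 0).
Definition vcoord (n m : nat) (x : 'I_(dimN n m) -> R) : R := x (inord 1).

Definition rfun (n m : nat) (x : 'I_(dimN n m) -> R) : R := vcoord x - ucoord x.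
Definition taufun (n m : nat) (x : 'I_(dimN n m) -> R) : R := vcoord x + ucoord x.
(* f = - u v = (|x|^2 - |t|^2)/4 *)
Definition ffun (n m : nat) (x : 'I_(dimN n m) -> R) : R := - (ucoord x * vcoord x).

Definition rhobar (n m : nat) (eps : R) (x : 'I_(dimN n m) -> R) : R :=
  rfun x + 2 * eps * ffun x.

Definition ynorm2 (n m : nat) (x : 'I_(dimN n m) -> R) : R :=
  \sum_(i < dimN n m | isY i) x i ^+ 2.
Definition znorm2 (n m : nat) (x : 'I_(dimN n m) -> R) : R :=
  \sum_(i < dimN n m | isZ i) x i ^+ 2.

(* gbar = -4 du dv + rhobar^2 gamma_{S^{n-1}} - tau^2 gamma_{S^{m-1}} *)
Definition gbar (n m : nat) (eps : R) : metric (dimN n m) :=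
  fun x i j =>
    if ((nat_of_ord i == 0)%N && (nat_of_ord j == 1)%N) || ((nat_of_ord i == 1)%N && (nat_of_ord j == 0)%N)
    then -2
    else if (i == j) && isY i then rhobar eps x ^+ 2 * (4 / (1 + ynorm2 x) ^+ 2)
    else if (i == j) && isZ i then - (taufun x ^+ 2 * (4 / (1 + znorm2 x) ^+ 2))
    else 0.
Arguments gbar : clear implicits.

Definition hbar (n m : nat) (eps : R) (x : 'I_(dimN n m) -> R) : R :=
  2^-1 + eps * ffun x / (2 * rhobar eps x).

Definition pibar (n m : nat) (eps : R) (x : 'I_(dimN n m) -> R) (i j : 'I_(dimN n m)) : R :=
  hess (gbar n m eps) (@ffun n m) x i j - hbar eps x * gbar n m eps x i j.

Definition wbar (n m : nat) (eps : R) (x : 'I_(dimN n m) -> R) : R :=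
  2^-1 * box (gbar n m eps) (@ffun n m) x - hbar eps x.

Definition Tvec (n m : nat) (x : 'I_(dimN n m) -> R) : 'I_(dimN n m) -> R :=
  fun k => if (nat_of_ord k == 0)%N then - ucoord x / (2 * sqrt (ffun x))
           else if (nat_of_ord k == 1)%N then vcoord x / (2 * sqrt (ffun x)) else 0.
Definition Nvec (n m : nat) (x : 'I_(dimN n m) -> R) : 'I_(dimN n m) -> R :=
  fun k => if (nat_of_ord k == 0)%N then ucoord x / (2 * sqrt (ffun x))
           else if (nat_of_ord k == 1)%N then vcoord x / (2 * sqrt (ffun x)) else 0.

(* In the null coordinates (u, v), completed by stereographic coordinates on the two
   spheres, the metric gbar is "paired": its only nonzero entries are gbar_uv = gbar_vu = -2
   and the diagonal angular entries rhobar^2 gamma and -tau^2 gamma.  Its inverse is then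
   explicit, and for a function F of (u, v) alone the only Christoffel symbols that matter are
   Gamma^u_ij = 1/4 d_v gbar_ij and Gamma^v_ij = 1/4 d_u gbar_ij.  This gives closed formulas
   for the Hessian and for box F, whose angular terms are (n-1) and (m-1) copies of the
   logarithmic derivatives of rhobar and tau.

   For f = -uv the Hessian formula gives pibar = k gbar on the S^{n-1} block and pibar = -k gbar
   on the (u, v) and S^{m-1} blocks, with k = eps f / (2 rhobar); the frame components follow
   from T_u T_v = 1/4 and N_u N_v = -1/4.  The box formula applied to f gives wbar in closed
   form.  Since wbar is defined through the inverse metric, it agrees with this closed form
   only where rhobar tau <> 0; this set is open along every coordinate line, which is all that
   is needed to transfer first and second coordinate derivatives, and a second application of
   the box formula then yields box wbar. *)

From Stdlib Require Import Reals FunctionalExtensionality.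
From Coquelicot Require Import Coquelicot.
From mathcomp Require Import all_boot all_order all_algebra.
From mathcomp Require Import Rstruct.
From mathcomp Require Import ring lra zify.
Import Order.TTheory GRing.Theory Num.Theory.
Local Open Scope ring_scope.
Set Implicit Arguments. Unset Strict Implicit. Unset Printing Implicit Defensive.

Section RealDerivatives.

Implicit Types (f g : R -> R) (a b c d : R).

Lemma is_derive_eq f g t0 df dg : f =1 g -> df = dg -> is_derive f t0 df -> is_derive g t0 dg.
Proof. by move=> fg <-; apply: is_derive_ext. Qed.

Lemma is_derive_cst c t0 : is_derive (fun _ => c) t0 0.
Proof. exact: is_derive_const. Qed.

Lemma is_derive_addr f g t0 df dg : is_derive f t0 df -> is_derive g t0 dg ->
  is_derive (fun t => f t + g t) t0 (df + dg).
Proof. exact: is_derive_plus. Qed.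

Lemma is_derive_mulr f g t0 df dg : is_derive f t0 df -> is_derive g t0 dg ->
  is_derive (fun t => f t * g t) t0 (df * g t0 + f t0 * dg).
Proof. by move=> fP gP; apply: is_derive_mult fP gP Rmult_comm. Qed.

Lemma is_derive_invr g t0 dg : is_derive g t0 dg -> g t0 != 0 ->
  is_derive (fun t => (g t)^-1) t0 (- dg / g t0 ^+ 2).
Proof. by move=> gP /eqP g0; have := is_derive_inv _ _ _ gP g0; rewrite !RealsE. Qed.

Lemma is_derive_affine a b t0 : is_derive (fun t => a * t + b) t0 a.
Proof.
apply: is_derive_eq
  (is_derive_addr (is_derive_scal _ _ a _ (is_derive_id t0)) (is_derive_cst b t0)) => //.
by rewrite RmultE mulr1 addr0.
Qed.

Lemma is_derive_affine_sqr a b c t0 :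
  is_derive (fun t => (a * t + b) ^+ 2 * c) t0 (2 * a * (a * t0 + b) * c).
Proof.
apply: is_derive_eq (is_derive_mulr (is_derive_mulr (is_derive_affine a b t0)
  (is_derive_affine a b t0)) (is_derive_cst c t0)); first by move=> t; rewrite expr2.
by ring.
Qed.

Lemma is_derive_affine_ratio a b c d t0 : c * t0 + d != 0 ->
  is_derive (fun t => (a * t + b) / (c * t + d)) t0
    ((a * d - b * c) / (c * t0 + d) ^+ 2).
Proof.
move=> q0; apply: is_derive_eq (is_derive_mulr (is_derive_affine a b t0)
  (is_derive_invr (is_derive_affine c d t0) q0)) => //.
by field.
Qed.

Lemma is_derive_sqr_ratio c d t0 : c * t0 + d != 0 ->
  is_derive (fun t : R => t ^+ 2 / (c * t + d) ^+ 2) t0 (2 * d * t0 / (c * t0 + d) ^+ 3).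
Proof.
move=> q0; have sqr0 : (c * t0 + d) ^+ 2 * 1 != 0 by rewrite mulr1 expf_neq0.
have := is_derive_mulr (is_derive_affine_sqr 1 0 1 t0)
  (is_derive_invr (is_derive_affine_sqr c d 1 t0) sqr0).
apply: is_derive_eq => [t|]; rewrite R0E R1E mul1r addr0 !mulr1 //.
by field.
Qed.

Lemma locally_neq0 g t0 : ex_derive g t0 -> g t0 != 0 -> locally t0 (fun t => g t != 0).
Proof.
move=> /ex_derive_continuous gC /eqP g0.
have /gC : locally (g t0) (fun y => y <> 0).
  exact: (locally_open _ _ (open_neq 0) (fun _ h => h) _ g0).
by apply: (filter_imp (fun t => g t <> 0)) => t /eqP.
Qed.

End RealDerivatives.

Section CoordinateCalculus.

Variable N : nat.
Implicit Types (F G : ('I_N -> R) -> R) (i j k : 'I_N).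

Lemma upd_id i z : upd z i (z i) = z.
Proof. by apply: functional_extensionality => k; rewrite /upd; case: eqP => // ->. Qed.

Lemma pder_is_derive i F y l : is_derive (fun t => F (upd y i t)) (y i) l -> pder i F y = l.
Proof. exact: is_derive_unique. Qed.

Lemma pder_cst i F y c : (forall t, F (upd y i t) = c) -> pder i F y = 0.
Proof. by move=> Fc; apply: pder_is_derive; apply: is_derive_eq (is_derive_cst c _). Qed.

Lemma pder_ext i F G : F =1 G -> pder i F =1 pder i G.
Proof. by move=> FG y; apply: Derive_ext => t; rewrite FG. Qed.

Definition line_open (P : ('I_N -> R) -> Prop) :=
  forall i z, P z -> locally (z i) (fun t => P (upd z i t)).

Lemma line_openI P Q : line_open P -> line_open Q -> line_open (fun z => P z /\ Q z).
Proof. by move=> oP oQ i z [Pz Qz]; apply: filter_and; [apply: oP | apply: oQ]. Qed.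

Lemma line_open_neq0 F :
  (forall i z, exists a b, forall t, F (upd z i t) = a * t + b) ->
  line_open (fun z => F z != 0).
Proof.
move=> Faff i z Fz; have [a [b Fab]] := Faff i z.
apply: locally_neq0; first by exists a; apply: is_derive_eq (is_derive_affine a b _).
by rewrite upd_id.
Qed.

Section LineOpen.

Variables (P : ('I_N -> R) -> Prop) (F G : ('I_N -> R) -> R).
Hypotheses (oP : line_open P) (FG : forall z, P z -> F z = G z).

Lemma pder_eq_on i y : P y -> pder i F y = pder i G y.
Proof. by move=> Py; apply: Derive_ext_loc; apply: filter_imp (oP i Py) => t /FG. Qed.

Lemma pder2_eq_on i j y : P y -> pder i (pder j F) y = pder i (pder j G) y.
Proof. by move=> Py; apply: Derive_ext_loc; apply: filter_imp (oP i Py) => t /pder_eq_on. Qed.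

Lemma box_eq_on g y : P y -> box g F y = box g G y.
Proof.
move=> Py; apply: eq_bigr => i _; apply: eq_bigr => j _; congr (_ * _).
rewrite /hess pder2_eq_on //; congr (_ - _); apply: eq_bigr => k _.
by rewrite pder_eq_on.
Qed.

End LineOpen.

Lemma bil_cvecr (B : 'I_N -> 'I_N -> R) X j : bil B X (cvec j) = \sum_i B i j * X i.
Proof.
apply: eq_bigr => i _; rewrite (bigD1 j) //= big1 ?addr0 => [|k /negbTE kj].
  by rewrite /cvec eqxx mulr1.
by rewrite /cvec kj mulr0.
Qed.

Lemma bil_cvecl (B : 'I_N -> 'I_N -> R) Y i : bil B (cvec i) Y = \sum_j B i j * Y j.
Proof.
rewrite /bil (bigD1 i) //= [X in _ + X]big1 ?addr0 => [|k /negbTE ki].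
  by apply: eq_bigr => j _; rewrite /cvec eqxx mulr1.
by apply: big1 => j _; rewrite /cvec ki mulr0 mul0r.
Qed.

End CoordinateCalculus.

Section PairedMetric.

Variables (N : nat) (p : 'I_N -> 'I_N) (e : ('I_N -> R) -> 'I_N -> R) (g : metric N).
Hypotheses (pK : involutive p) (e_p : forall z i, e z (p i) = e z i).
Hypothesis g_paired : forall z i j, g z i j = if j == p i then e z i else 0.

Variable z : 'I_N -> R.
Hypothesis e_neq0 : forall i, e z i != 0.

Lemma ginv_paired : ginv g z = \matrix_(i, j) (if j == p i then (e z i)^-1 else 0).
Proof.
set G := \matrix_(i, j) _.
have gG : (\matrix_(i, j) g z i j) *m G = 1%:M.
  apply/matrixP => i j; rewrite !mxE (bigD1 (p i)) //= big1 => [|k /negbTE kp].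
    rewrite !mxE g_paired eqxx pK e_p addr0 eq_sym.
    by case: eqP => _; rewrite ?mulfV ?mulr0.
  by rewrite mxE g_paired kp mul0r.
have [gU _] := mulmx1_unit gG.
by rewrite /ginv -[LHS]mulmx1 -gG mulmxA mulVmx // mul1mx.
Qed.

Lemma christoffel_paired k i j : christoffel g z k i j =
  2^-1 * (e z k)^-1 * (pder i (fun y => g y j (p k)) z + pder j (fun y => g y i (p k)) z
                       - pder (p k) (fun y => g y i j) z).
Proof.
rewrite /christoffel ginv_paired (bigD1 (p k)) //= big1 => [|l /negbTE lp].
  by rewrite mxE eqxx addr0 RmultE mulrA.
by rewrite mxE lp mul0r.
Qed.

Lemma christoffel_paired_cst k c i j : (forall y, e y k = c) ->
  christoffel g z k i j = - (2 * c)^-1 * ((j == p i)%:R * pder (p k) (fun y => e y i) z).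
Proof.
move=> ek; have gk l a : pder l (fun y => g y a (p k)) z = 0.
  apply: (pder_cst (c := if a == k then c else 0)) => t.
  by rewrite g_paired (inj_eq (can_inj pK)) eq_sym; case: eqP => // ->.
rewrite christoffel_paired !gk add0r (ek z).
have -> : pder (p k) (fun y => g y i j) z = (j == p i)%:R * pder (p k) (fun y => e y i) z.
  rewrite (pder_ext _ (fun y => g_paired y i j)).
  by case: eqP => _; rewrite ?mul1r ?mul0r //; apply: (pder_cst (c := 0)).
by rewrite invfM; ring.
Qed.

Lemma hess_paired_null a c F i j : a != p a -> (forall y, e y a = c) ->
  (forall k, k != a -> k != p a -> pder k F z = 0) ->
  hess g F z i j = pder i (pder j F) z + (2 * c)^-1 * (j == p i)%:R *
    (pder (p a) (fun y => e y i) z * pder a F z + pder a (fun y => e y i) z * pder (p a) F z).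
Proof.
move=> apa ea Fa; have epa y : e y (p a) = c by rewrite e_p.
have paa : p a != a by rewrite eq_sym.
rewrite /hess RminusE (bigD1 a) // (bigD1 (p a)) //= big1 => [|k /andP[kpa ka]].
  by rewrite (christoffel_paired_cst _ _ ea) (christoffel_paired_cst _ _ epa) pK addr0; ring.
by rewrite Fa // mulr0.
Qed.

Lemma box_paired F : box g F z = \sum_i (e z i)^-1 * hess g F z i (p i).
Proof.
apply: eq_bigr => i _; rewrite ginv_paired (bigD1 (p i)) //= big1 => [|j /negbTE jp].
  by rewrite mxE eqxx addr0.
by rewrite mxE jp mul0r.
Qed.

End PairedMetric.

Section Chart.

Variables n m : nat.
Local Notation N := (dimN n m).
Implicit Types (y z : 'I_N -> R) (i j k : 'I_N).

Definition iu : 'I_N := inord 0.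
Definition iv : 'I_N := inord 1.

Lemma eq_iu i : (i == iu) = (val i == 0%N).
Proof. by rewrite -val_eqE /= inordK. Qed.

Lemma eq_iv i : (i == iv) = (val i == 1%N).
Proof. by rewrite -val_eqE /= inordK. Qed.

Lemma iv_neq_iu : (iv == iu) = false.
Proof. by rewrite eq_iu /= inordK. Qed.

Lemma iu_neq_iv : (iu == iv) = false.
Proof. by rewrite eq_sym iv_neq_iu. Qed.

Lemma isY_iu : isY iu = false. Proof. by rewrite /isY /= inordK. Qed.
Lemma isZ_iu : isZ iu = false. Proof. by rewrite /isZ /= inordK // addn2. Qed.
Lemma isY_iv : isY iv = false. Proof. by rewrite /isY /= inordK. Qed.
Lemma isZ_iv : isZ iv = false. Proof. by rewrite /isZ /= inordK // addn2. Qed.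

Variant coord_spec i : bool -> bool -> bool -> bool -> Type :=
  | CoordU of i = iu : coord_spec i true false false false
  | CoordV of i = iv : coord_spec i false true false false
  | CoordY of isY i : coord_spec i false false true false
  | CoordZ of isZ i : coord_spec i false false false true.

Lemma coordP i : coord_spec i (i == iu) (i == iv) (isY i) (isZ i).
Proof.
have [->|u'] := eqVneq i iu; first by rewrite iu_neq_iv isY_iu isZ_iu; constructor.
have [->|v'] := eqVneq i iv; first by rewrite isY_iv isZ_iv; constructor.
move: u' v'; rewrite /isY /isZ eq_iu eq_iv; case: i => [[|[|k]] ki] //= _ _.
by case: (ltnP k.+2 (n.-1 + 2)) => ?; constructor; rewrite /isY /isZ //= ltnNge; apply/negP.
Qed.

Lemma isZ_isY i : isZ i -> isY i = false.
Proof. by case: coordP. Qed.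

Lemma ucoord_upd z i t : ucoord (upd z i t) = if i == iu then t else ucoord z.
Proof. by rewrite /ucoord /upd eq_sym. Qed.

Lemma vcoord_upd z i t : vcoord (upd z i t) = if i == iv then t else vcoord z.
Proof. by rewrite /vcoord /upd eq_sym. Qed.

Definition partner i := if i == iu then iv else if i == iv then iu else i.

Lemma partnerK : involutive partner.
Proof.
move=> i; rewrite /partner.
have [->|u'] := eqVneq i iu; first by rewrite iv_neq_iu !eqxx.
have [->|v'] := eqVneq i iv; first by rewrite eqxx.
by rewrite (negbTE u') (negbTE v').
Qed.

Lemma partner_id i : isY i || isZ i -> partner i = i.
Proof. by rewrite /partner; case: coordP. Qed.

Lemma partner_iu : partner iu = iv.
Proof. by rewrite /partner eqxx. Qed.

Lemma partner_iv : partner iv = iu.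
Proof. by rewrite /partner iv_neq_iu eqxx. Qed.

Lemma ffun_uv z : ffun z = - (ucoord z * vcoord z).
Proof. by rewrite /ffun !RealsE. Qed.

Lemma taufun_uv z : taufun z = vcoord z + ucoord z.
Proof. by rewrite /taufun !RealsE. Qed.

Lemma rfun_uv z : rfun z = vcoord z - ucoord z.
Proof. by rewrite /rfun !RealsE. Qed.

Definition conf_y z := 4 / (1 + ynorm2 z) ^+ 2.
Definition conf_z z := 4 / (1 + znorm2 z) ^+ 2.

Lemma conf_y_gt0 z : 0 < conf_y z.
Proof.
have y0 : 0 <= ynorm2 z by apply: sumr_ge0 => i _; apply: sqr_ge0.
by rewrite divr_gt0 ?exprn_gt0 //; lra.
Qed.

Lemma conf_z_gt0 z : 0 < conf_z z.
Proof.
have z0 : 0 <= znorm2 z by apply: sumr_ge0 => i _; apply: sqr_ge0.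
by rewrite divr_gt0 ?exprn_gt0 //; lra.
Qed.

Lemma conf_y_upd z i t : ~~ isY i -> conf_y (upd z i t) = conf_y z.
Proof.
move=> iY; congr (4 / (1 + _) ^+ 2); apply: eq_bigr => j jY.
by rewrite /upd; case: eqP => // ji; move: iY; rewrite -ji jY.
Qed.

Lemma conf_z_upd z i t : ~~ isZ i -> conf_z (upd z i t) = conf_z z.
Proof.
move=> iZ; congr (4 / (1 + _) ^+ 2); apply: eq_bigr => j jZ.
by rewrite /upd; case: eqP => // ji; move: iZ; rewrite -ji jZ.
Qed.

Lemma sum_coords (h : 'I_N -> R) :
  \sum_k h k = h iu + h iv + \sum_(k | isY k) h k + \sum_(k | isZ k) h k.
Proof.
rewrite (bigD1 iu) //= (bigD1 iv) ?iv_neq_iu //= (bigID (@isY n m)) /= !addrA.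
by congr (_ + _ + _ + _); apply: eq_bigl => k; case: coordP.
Qed.

Lemma sum_isY_cst (c : R) : \sum_(k < N | isY k) c = c *+ n.-1.
Proof.
rewrite big_mkcond /= -(big_mkord xpredT (fun l => if (2 <= l < n.-1 + 2)%N then c else 0)).
rewrite (big_cat_nat (n := 2)) //= big1_seq ?add0r => [|l]; last first.
  by rewrite mem_index_iota => /andP[_ k2]; case: ifP => //; lia.
rewrite (big_cat_nat (n := n.-1 + 2)) /dimN ?leq_addl //=; last by lia.
rewrite [X in _ + X]big1_seq ?addr0 => [|l]; last first.
  by rewrite mem_index_iota => ?; case: ifP => //; lia.
rewrite (eq_big_seq (fun _ => c)) ?sumr_const_nat => [|l]; last first.
  by rewrite mem_index_iota => ?; case: ifP => //; lia.
by congr (_ *+ _); lia.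
Qed.

Lemma sum_isZ_cst (c : R) : \sum_(k < N | isZ k) c = c *+ m.-1.
Proof.
rewrite big_mkcond /= -(big_mkord xpredT (fun l => if (n.-1 + 2 <= l)%N then c else 0)).
rewrite (big_cat_nat (n := n.-1 + 2)) /dimN //=; last by lia.
rewrite big1_seq ?add0r => [|l]; last first.
  by rewrite mem_index_iota => ?; case: ifP => //; lia.
rewrite (eq_big_seq (fun _ => c)) ?sumr_const_nat => [|l]; last first.
  by rewrite mem_index_iota => ?; case: ifP => //; lia.
by congr (_ *+ _); lia.
Qed.

Lemma taufun_upd_u z t : taufun (upd z iu t) = 1 * t + vcoord z.
Proof. by rewrite taufun_uv ucoord_upd vcoord_upd eqxx iu_neq_iv mul1r addrC. Qed.

Lemma taufun_upd_v z t : taufun (upd z iv t) = 1 * t + ucoord z.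
Proof. by rewrite taufun_uv ucoord_upd vcoord_upd eqxx iv_neq_iu mul1r. Qed.

Definition angular_invariant (F : ('I_N -> R) -> R) :=
  forall z k t, isY k || isZ k -> F (upd z k t) = F z.

Lemma angular_invariant_uv (G : R -> R -> R) :
  angular_invariant (fun z => G (ucoord z) (vcoord z)).
Proof. by move=> z k t; rewrite ucoord_upd vcoord_upd; case: (coordP k). Qed.

Lemma affine_along_uv (F : ('I_N -> R) -> R) : angular_invariant F ->
  (forall z, exists a b, forall t, F (upd z iu t) = a * t + b) ->
  (forall z, exists a b, forall t, F (upd z iv t) = a * t + b) ->
  forall k z, exists a b, forall t, F (upd z k t) = a * t + b.
Proof.
move=> Fa Fu Fv k z; case: (coordP k) => [->|->|kY|kZ]; [exact: Fu | exact: Fv | |];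
  by exists 0, (F z) => t; rewrite Fa ?kY ?kZ ?orbT // mul0r add0r.
Qed.

Lemma line_open_taufun : line_open (fun z => taufun z != 0).
Proof.
apply: line_open_neq0; apply: affine_along_uv.
- by move=> z k t kYZ; rewrite !taufun_uv; apply: (angular_invariant_uv (fun u v => v + u)).
- by move=> z; exists 1, (vcoord z) => t; rewrite taufun_upd_u.
- by move=> z; exists 1, (ucoord z) => t; rewrite taufun_upd_v.
Qed.

Lemma pder_angular F z k : angular_invariant F -> isY k || isZ k -> pder k F z = 0.
Proof. by move=> Fa kYZ; apply: (pder_cst (c := F z)) => t; apply: Fa. Qed.

Lemma pder2_angular F z i k : angular_invariant F -> isY k || isZ k -> pder i (pder k F) z = 0.
Proof.
move=> Fa kYZ; rewrite (pder_ext _ (fun y => pder_angular y Fa kYZ)).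
exact: (pder_cst (c := 0)).
Qed.

Lemma angular_invariant_ffun : angular_invariant (@ffun n m).
Proof.
by move=> z k t; rewrite !ffun_uv; apply: (angular_invariant_uv (fun u v => - (u * v))).
Qed.

Lemma pder_uv_lin a b i z :
  pder i (fun y => a * ucoord y + b * vcoord y) z = a * (i == iu)%:R + b * (i == iv)%:R.
Proof.
case: (coordP i) => [->|->|iY|iZ].
- apply: pder_is_derive; apply: is_derive_eq (is_derive_affine a (b * vcoord z) _) => [t|].
    by rewrite ucoord_upd vcoord_upd eqxx iu_neq_iv.
  by rewrite mulr1 mulr0 addr0.
- apply: pder_is_derive; apply: is_derive_eq (is_derive_affine b (a * ucoord z) _) => [t|].
    by rewrite ucoord_upd vcoord_upd eqxx iv_neq_iu addrC.
  by rewrite mulr1 mulr0 add0r.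
all: rewrite !mulr0 addr0; apply: pder_angular; last by rewrite ?iY ?iZ ?orbT.
all: exact: (angular_invariant_uv (fun u v => a * u + b * v)).
Qed.

Lemma pder_ffun i z :
  pder i (@ffun n m) z = - (i == iv)%:R * ucoord z + - (i == iu)%:R * vcoord z.
Proof.
case: (coordP i) => [->|->|iY|iZ].
- apply: pder_is_derive; apply: is_derive_eq (is_derive_affine (- vcoord z) 0 _) => [t|].
    by rewrite ffun_uv ucoord_upd vcoord_upd eqxx iu_neq_iv R0E RoppE; ring.
  by rewrite /= RoppE; ring.
- apply: pder_is_derive; apply: is_derive_eq (is_derive_affine (- ucoord z) 0 _) => [t|].
    by rewrite ffun_uv ucoord_upd vcoord_upd eqxx iv_neq_iu R0E RoppE; ring.
  by rewrite /= RoppE; ring.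
all: rewrite (pder_angular _ angular_invariant_ffun) ?iY ?iZ ?orbT //=; ring.
Qed.

Lemma pder2_ffun i j z :
  pder i (pder j (@ffun n m)) z = - ((j == iv)%:R * (i == iu)%:R + (j == iu)%:R * (i == iv)%:R).
Proof. by rewrite (pder_ext _ (pder_ffun j)) pder_uv_lin !mulNr opprD. Qed.

Definition uv_supported (X : 'I_N -> R) := forall k, isY k || isZ k -> X k = 0.

Lemma sum_uv_supported (h : 'I_N -> R) : uv_supported h -> \sum_k h k = h iu + h iv.
Proof.
by move=> h0; rewrite sum_coords !big1 ?addr0 // => k kYZ; apply: h0; rewrite kYZ ?orbT.
Qed.

Lemma bil_uv_supported (B : 'I_N -> 'I_N -> R) X Y : uv_supported X -> uv_supported Y ->
  bil B X Y = B iu iu * X iu * Y iu + B iu iv * X iu * Y iv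
            + (B iv iu * X iv * Y iu + B iv iv * X iv * Y iv).
Proof.
move=> X0 Y0; rewrite /bil sum_uv_supported => [|k kYZ].
  by rewrite !sum_uv_supported // => k kYZ; rewrite Y0 ?mulr0.
by apply: big1 => j _; rewrite X0 ?mulr0 ?mul0r.
Qed.

Section Metric.

Variable eps : R.

Definition gcoef z i :=
  if isY i then rhobar eps z ^+ 2 * conf_y z
  else if isZ i then - (taufun z ^+ 2 * conf_z z) else -2.

Lemma gbar_paired z i j : gbar n m eps z i j = if j == partner i then gcoef z i else 0.
Proof.
rewrite /gbar /gcoef /partner -!eq_iu -!eq_iv.
case: (coordP i) => [->|->|iY|iZ];
  rewrite ?eqxx ?iu_neq_iv ?iv_neq_iu ?isY_iu ?isY_iv ?isZ_iu ?isZ_iv /= ?andbT ?andbF ?orbF.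
all: by rewrite /conf_y /conf_z eq_sym; case: eqP.
Qed.

Lemma gcoef_partner z i : gcoef z (partner i) = gcoef z i.
Proof.
case: (coordP i) => [->|->|iY|iZ]; rewrite ?partner_iu ?partner_iv ?partner_id ?iY ?iZ ?orbT //;
  by rewrite /gcoef isY_iu isZ_iu isY_iv isZ_iv.
Qed.

Definition nondegenerate z := rhobar eps z != 0 /\ taufun z != 0.

Lemma gcoef_neq0 z i : nondegenerate z -> gcoef z i != 0.
Proof.
move=> [r0 t0]; rewrite /gcoef; case: ifP => _.
  by rewrite mulf_neq0 ?expf_neq0 ?(lt0r_neq0 (conf_y_gt0 z)).
case: ifP => _; rewrite oppr_eq0 ?pnatr_eq0 //.
by rewrite mulf_neq0 ?expf_neq0 ?(lt0r_neq0 (conf_z_gt0 z)).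
Qed.

Lemma rhobar_uv z : rhobar eps z = vcoord z - ucoord z - 2 * eps * (ucoord z * vcoord z).
Proof. by rewrite /rhobar /rfun /ffun !RealsE (_ : nat_of_pos 2 = 2%N) //; ring. Qed.

Definition rhobar_du z := -1 - 2 * eps * vcoord z.
Definition rhobar_dv z := 1 - 2 * eps * ucoord z.

Lemma rhobar_upd_u z t : rhobar eps (upd z iu t) = rhobar_du z * t + vcoord z.
Proof. by rewrite rhobar_uv ucoord_upd vcoord_upd eqxx iu_neq_iv /rhobar_du; ring. Qed.

Lemma rhobar_upd_v z t : rhobar eps (upd z iv t) = rhobar_dv z * t - ucoord z.
Proof. by rewrite rhobar_uv ucoord_upd vcoord_upd eqxx iv_neq_iu /rhobar_dv; ring. Qed.

Lemma rhobar_du_uv z : rhobar_du z * ucoord z + vcoord z = rhobar eps z.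
Proof. by rewrite -rhobar_upd_u upd_id. Qed.

Lemma rhobar_dv_uv z : rhobar_dv z * vcoord z - ucoord z = rhobar eps z.
Proof. by rewrite -rhobar_upd_v upd_id. Qed.

Lemma line_open_rhobar : line_open (fun z => rhobar eps z != 0).
Proof.
apply: line_open_neq0; apply: affine_along_uv.
- by move=> z k t kYZ; rewrite !rhobar_uv;
    apply: (angular_invariant_uv (fun u v => v - u - 2 * eps * (u * v))).
- by move=> z; exists (rhobar_du z), (vcoord z) => t; rewrite rhobar_upd_u.
- by move=> z; exists (rhobar_dv z), (- ucoord z) => t; rewrite rhobar_upd_v.
Qed.

Lemma line_open_nondegenerate : line_open nondegenerate.
Proof. exact: line_openI line_open_rhobar line_open_taufun. Qed.

Definition gcoef_du z i :=
  if isY i then 2 * rhobar_du z * rhobar eps z * conf_y z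
  else if isZ i then - (2 * taufun z * conf_z z) else 0.
Definition gcoef_dv z i :=
  if isY i then 2 * rhobar_dv z * rhobar eps z * conf_y z
  else if isZ i then - (2 * taufun z * conf_z z) else 0.

Lemma pder_u_gcoef z i : pder iu (gcoef^~ i) z = gcoef_du z i.
Proof.
rewrite /gcoef /gcoef_du; case: ifP => iY.
  apply: pder_is_derive; apply: is_derive_eq (is_derive_affine_sqr _ (vcoord z) _ _) => [t|].
    by rewrite rhobar_upd_u conf_y_upd ?isY_iu.
  by rewrite -[z iu]/(ucoord z) rhobar_uv /rhobar_du; ring.
case: ifP => iZ; last exact: (pder_cst (c := -2)).
apply: pder_is_derive; apply: is_derive_eq (is_derive_affine_sqr 1 (vcoord z) (- conf_z z) _) => [t|].
  by rewrite taufun_upd_u conf_z_upd ?isZ_iu // mulrN.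
by rewrite -[z iu]/(ucoord z) taufun_uv R1E RoppE; ring.
Qed.

Lemma pder_v_gcoef z i : pder iv (gcoef^~ i) z = gcoef_dv z i.
Proof.
rewrite /gcoef /gcoef_dv; case: ifP => iY.
  apply: pder_is_derive; apply: is_derive_eq (is_derive_affine_sqr _ (- ucoord z) _ _) => [t|].
    by rewrite rhobar_upd_v conf_y_upd ?isY_iv.
  by rewrite -[z iv]/(vcoord z) rhobar_uv /rhobar_dv RoppE; ring.
case: ifP => iZ; last exact: (pder_cst (c := -2)).
apply: pder_is_derive; apply: is_derive_eq (is_derive_affine_sqr 1 (ucoord z) (- conf_z z) _) => [t|].
  by rewrite taufun_upd_v conf_z_upd ?isZ_iv // mulrN.
by rewrite -[z iv]/(vcoord z) taufun_uv R1E RoppE; ring.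
Qed.

Lemma hess_gbar F z i j : angular_invariant F -> nondegenerate z ->
  hess (gbar n m eps) F z i j = pder i (pder j F) z
    - 4^-1 * (j == partner i)%:R * (gcoef_dv z i * pder iu F z + gcoef_du z i * pder iv F z).
Proof.
move=> Fa nd.
have gu y : gcoef y iu = -2 by rewrite /gcoef isY_iu isZ_iu.
rewrite (hess_paired_null partnerK gcoef_partner gbar_paired (fun i => gcoef_neq0 i nd) _ _ _ gu).
- by rewrite partner_iu pder_u_gcoef pder_v_gcoef mulrN invrN -natrM; ring.
- by rewrite partner_iu iu_neq_iv.
by move=> k ku; rewrite partner_iu => kv; apply: pder_angular => //; move: ku kv; case: coordP.
Qed.

Lemma box_gbar F z : angular_invariant F -> nondegenerate z ->
  box (gbar n m eps) F z =
    - 2^-1 * (pder iu (pder iv F) z + pder iv (pder iu F) z)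
    - (n.-1)%:R * (rhobar_dv z * pder iu F z + rhobar_du z * pder iv F z) / (2 * rhobar eps z)
    - (m.-1)%:R * (pder iu F z + pder iv F z) / (2 * taufun z).
Proof.
move=> Fa [r0 t0]; have nd : nondegenerate z by [].
rewrite (box_paired partnerK gcoef_partner gbar_paired (fun i => gcoef_neq0 i nd)) sum_coords.
have hY k : isY k -> (gcoef z k)^-1 * hess (gbar n m eps) F z k (partner k) =
    - (rhobar_dv z * pder iu F z + rhobar_du z * pder iv F z) / (2 * rhobar eps z).
  move=> kY; have kYZ : isY k || isZ k by rewrite kY.
  rewrite hess_gbar // partner_id // eqxx /= pder2_angular // /gcoef_dv /gcoef_du /gcoef kY.
  by field; rewrite r0 (lt0r_neq0 (conf_y_gt0 z)).
have hZ k : isZ k -> (gcoef z k)^-1 * hess (gbar n m eps) F z k (partner k) =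
    - (pder iu F z + pder iv F z) / (2 * taufun z).
  move=> kZ; have kYZ : isY k || isZ k by rewrite kZ orbT.
  rewrite hess_gbar // partner_id // eqxx /= pder2_angular // /gcoef_dv /gcoef_du /gcoef.
  rewrite isZ_isY // kZ.
  by field; rewrite t0 (lt0r_neq0 (conf_z_gt0 z)).
rewrite (eq_bigr _ hY) (eq_bigr _ hZ) sum_isY_cst sum_isZ_cst partner_iu partner_iv.
rewrite !hess_gbar // partner_iu partner_iv !eqxx /gcoef_dv /gcoef_du /gcoef.
rewrite isY_iu isZ_iu isY_iv isZ_iv -[_ *+ n.-1]mulr_natl -[_ *+ m.-1]mulr_natl.
by field; rewrite r0 t0.
Qed.

End Metric.

End Chart.

Arguments iu {n m}.
Arguments iv {n m}.
Arguments angular_invariant_ffun {n m}.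

Section PiBar.

Variables (n m : nat) (eps : R).
Local Notation N := (dimN n m).
Implicit Types (y z : 'I_N -> R) (i j k : 'I_N).

Definition kbar z := eps * ffun z / (2 * rhobar eps z).

Lemma hbarE z : hbar eps z = 2^-1 + kbar z.
Proof. by rewrite /hbar. Qed.

Lemma pibar_gbar z i j : nondegenerate eps z ->
  pibar eps z i j = (if isY i then kbar z else - kbar z) * gbar n m eps z i j.
Proof.
move=> nd; have [r0 _] := nd.
rewrite /pibar (hess_gbar _ _ angular_invariant_ffun nd) !gbar_paired pder2_ffun.
rewrite !pder_ffun hbarE /kbar /gcoef_dv /gcoef_du /gcoef /rhobar_dv /rhobar_du.
move: r0; rewrite rhobar_uv ffun_uv => r0.
case: (coordP i) => [->|->|iY|iZ]; rewrite ?partner_iu ?partner_iv ?partner_id ?iY ?iZ ?orbT //;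
  rewrite ?eqxx ?iu_neq_iv ?iv_neq_iu /=.
all: rewrite ?taufun_uv ?oppr0 ?mul0r ?mulr0 ?addr0 ?add0r.
all: by case: eqP => _ /=; rewrite ?(RminusE, RmultE, RplusE, RoppE); field.
Qed.

Lemma pibar_off_partner z i j : nondegenerate eps z -> j != partner i -> pibar eps z i j = 0.
Proof. by move=> nd /negbTE jp; rewrite pibar_gbar // gbar_paired jp mulr0. Qed.

Lemma bil_pibar_uv z X Y : nondegenerate eps z -> uv_supported X -> uv_supported Y ->
  bil (pibar eps z) X Y = 2 * kbar z * (X iu * Y iv + X iv * Y iu).
Proof.
move=> nd X0 Y0; rewrite bil_uv_supported // !pibar_gbar // !gbar_paired partner_iu partner_iv.
by rewrite !eqxx iu_neq_iv iv_neq_iu /gcoef isY_iu isZ_iu isY_iv isZ_iv; ring.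
Qed.

Lemma bil_pibar_cvec z X i : nondegenerate eps z -> uv_supported X -> isY i || isZ i ->
  bil (pibar eps z) X (cvec i) = 0 /\ bil (pibar eps z) (cvec i) X = 0.
Proof.
move=> nd X0 iYZ; have [iu' iv'] : i != iu /\ i != iv by move: iYZ; case: coordP.
rewrite bil_cvecr bil_cvecl !sum_uv_supported => [|k kYZ|k kYZ]; try by rewrite X0 ?mulr0.
rewrite !pibar_gbar // !gbar_paired partner_iu partner_iv partner_id //.
by rewrite (negbTE iu') (negbTE iv') eq_sym (negbTE iu') eq_sym (negbTE iv') !mulr0 !mul0r addr0.
Qed.

End PiBar.

Section Frame.

Variables n m : nat.

Lemma Tvec_uv_supported (x : 'I_(dimN n m) -> R) : uv_supported (Tvec x).
Proof. by move=> k; rewrite /Tvec -eq_iu -eq_iv; case: coordP. Qed.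

Lemma Nvec_uv_supported (x : 'I_(dimN n m) -> R) : uv_supported (Nvec x).
Proof. by move=> k; rewrite /Nvec -eq_iu -eq_iv; case: coordP. Qed.

Lemma frame_products (x : 'I_(dimN n m) -> R) : 0 < ffun x ->
  let T := Tvec x in let N := Nvec x in
  [/\ T iu * T iv + T iv * T iu = 2^-1, N iu * N iv + N iv * N iu = - 2^-1,
      T iu * N iv + T iv * N iu = 0 & N iu * T iv + N iv * T iu = 0].
Proof.
move=> f0 T N; rewrite /T /N /Tvec /Nvec -!eq_iu -!eq_iv eqxx iv_neq_iu eqxx.
have q2 : sqrt (ffun x) ^+ 2 = - (ucoord x * vcoord x) by rewrite RsqrtE sqr_sqrtr ?ltW // ffun_uv.
have q0 : sqrt (ffun x) != 0 by rewrite RsqrtE sqrtr_eq0 -ltNge.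
have /andP[u0 v0] : (ucoord x != 0) && (vcoord x != 0).
  by rewrite -negb_or -mulf_eq0 -oppr_eq0 -q2 expf_neq0.
split; [| | by ring | by ring].
- transitivity (- (ucoord x * vcoord x) / (2 * sqrt (ffun x) ^+ 2)); first by field.
  by rewrite q2; field; rewrite u0 v0.
- transitivity (ucoord x * vcoord x / (2 * sqrt (ffun x) ^+ 2)); first by field.
  by rewrite q2; field; rewrite u0 v0.
Qed.

End Frame.

Lemma natr_pred k : (1 <= k)%N -> (k.-1)%:R = k%:R - 1 :> R.
Proof. by move=> k1; rewrite -subn1 natrB. Qed.

Section WaveOperator.

Variables (n m : nat) (eps : R).
Hypotheses (n1 : (1 <= n)%N) (m1 : (1 <= m)%N).
Local Notation N := (dimN n m).
Implicit Types (y z : 'I_N -> R).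

Definition wbar_cf z := (n%:R + m%:R - 2) / 4 + (n%:R - 2) * eps * ffun z / (2 * rhobar eps z).

Lemma wbarE z : nondegenerate eps z -> wbar eps z = wbar_cf z.
Proof.
move=> nd; have [r0 t0] := nd.
rewrite /wbar (box_gbar angular_invariant_ffun nd) !pder2_ffun !pder_ffun hbarE /kbar /wbar_cf.
rewrite !eqxx iu_neq_iv iv_neq_iu /= !natr_pred // /rhobar_dv /rhobar_du.
move: r0 t0; rewrite ffun_uv rhobar_uv taufun_uv => r0 t0.
by rewrite ?(RminusE, RmultE, RplusE, RoppE); field; rewrite r0 t0.
Qed.

Lemma angular_invariant_wbar_cf : angular_invariant wbar_cf.
Proof.
move=> z k t kYZ; rewrite /wbar_cf !ffun_uv !rhobar_uv.
exact: (angular_invariant_uv (fun u v =>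
  (n%:R + m%:R - 2) / 4 + (n%:R - 2) * eps * - (u * v) / (2 * (v - u - 2 * eps * (u * v))))).
Qed.

(* Numerals passed directly as arguments of type [R] would be read in Stdlib's [R_scope]. *)
Let C := ((n%:R : R) + m%:R - 2) / 4.
Let K := (n%:R - 2) * eps / 2.

Lemma pder_u_wbar_cf z : rhobar eps z != 0 ->
  pder iu wbar_cf z = K * (- vcoord z ^+ 2 / rhobar eps z ^+ 2).
Proof.
rewrite -rhobar_du_uv => r0; apply: pder_is_derive.
have := is_derive_addr (is_derive_cst C (z iu))
  (is_derive_mulr (is_derive_cst K (z iu)) (is_derive_affine_ratio (- vcoord z) 0 r0)).
apply: is_derive_eq => [t|].
  rewrite /wbar_cf rhobar_upd_u ffun_uv ucoord_upd vcoord_upd eqxx iu_neq_iv /C /K invfM.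
  by rewrite ?(RminusE, RmultE, RplusE, RoppE, R0E); ring.
by rewrite -[z iu]/(ucoord z) rhobar_du_uv RoppE R0E; ring.
Qed.

Lemma pder_v_wbar_cf z : rhobar eps z != 0 ->
  pder iv wbar_cf z = K * (ucoord z ^+ 2 / rhobar eps z ^+ 2).
Proof.
rewrite -rhobar_dv_uv => r0; apply: pder_is_derive.
have := is_derive_addr (is_derive_cst C (z iv))
  (is_derive_mulr (is_derive_cst K (z iv)) (is_derive_affine_ratio (- ucoord z) 0 r0)).
apply: is_derive_eq => [t|].
  rewrite /wbar_cf rhobar_upd_v ffun_uv ucoord_upd vcoord_upd eqxx iv_neq_iu /C /K invfM.
  by rewrite ?(RminusE, RmultE, RplusE, RoppE, R0E); ring.
by rewrite -[z iv]/(vcoord z) rhobar_dv_uv RoppE R0E; ring.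
Qed.

Lemma pder_vu_wbar_cf z : rhobar eps z != 0 ->
  pder iv (pder iu wbar_cf) z = K * (2 * ucoord z * vcoord z / rhobar eps z ^+ 3).
Proof.
move=> r0; rewrite (pder_eq_on (@line_open_rhobar n m eps) pder_u_wbar_cf iv r0).
move: r0; rewrite -rhobar_dv_uv => r0; apply: pder_is_derive.
have := is_derive_mulr (is_derive_cst (- K) (z iv)) (is_derive_sqr_ratio r0).
apply: is_derive_eq => [t|].
  by rewrite vcoord_upd eqxx rhobar_upd_v RoppE; ring.
by rewrite -[z iv]/(vcoord z) rhobar_dv_uv RoppE; ring.
Qed.

Lemma pder_uv_wbar_cf z : rhobar eps z != 0 ->
  pder iu (pder iv wbar_cf) z = K * (2 * ucoord z * vcoord z / rhobar eps z ^+ 3).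
Proof.
move=> r0; rewrite (pder_eq_on (@line_open_rhobar n m eps) pder_v_wbar_cf iu r0).
move: r0; rewrite -rhobar_du_uv => r0; apply: pder_is_derive.
have := is_derive_mulr (is_derive_cst K (z iu)) (is_derive_sqr_ratio r0).
apply: is_derive_eq => [t|].
  by rewrite ucoord_upd eqxx rhobar_upd_u; ring.
by rewrite -[z iu]/(ucoord z) rhobar_du_uv; ring.
Qed.

Lemma box_wbar z : nondegenerate eps z ->
  box (gbar n m eps) (wbar eps) z =
    - ((n%:R - 2) * eps / (2 * rhobar eps z)) *
      ((n%:R - 3) * ffun z / rhobar eps z ^+ 2
       - (n%:R + m%:R - 2) * rfun z / (2 * rhobar eps z)).
Proof.
move=> nd; have [r0 t0] := nd.
rewrite (box_eq_on (@line_open_nondegenerate n m eps) wbarE _ nd) (box_gbar angular_invariant_wbar_cf nd).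
rewrite pder_uv_wbar_cf // pder_vu_wbar_cf // pder_u_wbar_cf // pder_v_wbar_cf // /K.
rewrite !natr_pred // /rhobar_dv /rhobar_du ffun_uv rfun_uv.
move: r0 t0; rewrite rhobar_uv taufun_uv => r0 t0.
by field; rewrite r0 t0.
Qed.

End WaveOperator.

Theorem proposition3p7 (n m : nat) (eps : R) (x : 'I_(dimN n m) -> R) :
  (1 <= n)%N -> (1 <= m)%N ->
  0 < taufun x -> 0 < rfun x ->
  0 < ffun x ->
  rhobar eps x != 0 ->
  let k := eps * ffun x / (2 * rhobar eps x) in
  let P := pibar eps x in
  (* components of pibar in the frame (T, N, d_{y_a}, d_{z_C}) *)
  (bil P (Tvec x) (Tvec x) = k /\
   bil P (Nvec x) (Nvec x) = - k /\
   bil P (Tvec x) (Nvec x) = 0 /\ bil P (Nvec x) (Tvec x) = 0 /\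
   (forall a b : 'I_(dimN n m), isY a -> isY b ->
      P a b = k * gbar n m eps x a b) /\
   (forall C D : 'I_(dimN n m), isZ C -> isZ D ->
      P C D = - k * gbar n m eps x C D) /\
   (forall i : 'I_(dimN n m), isY i || isZ i ->
      bil P (Tvec x) (cvec i) = 0 /\ bil P (cvec i) (Tvec x) = 0 /\
      bil P (Nvec x) (cvec i) = 0 /\ bil P (cvec i) (Nvec x) = 0) /\
   (forall a C : 'I_(dimN n m), isY a -> isZ C -> P a C = 0 /\ P C a = 0)) /\
  (* the formula for wbar = 1/2 box f - hbar *)
  wbar eps x = (n%:R + m%:R - 2) / 4 + (n%:R - 2) * eps * ffun x / (2 * rhobar eps x) /\
  (* the formula for box wbar *)
  box (gbar n m eps) (wbar eps) x =
    - ((n%:R - 2) * eps / (2 * rhobar eps x)) *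
      ((n%:R - 3) * ffun x / rhobar eps x ^+ 2
       - (n%:R + m%:R - 2) * rfun x / (2 * rhobar eps x)).
Proof.
move=> n1 m1 tau0 _ f0 r0 k P.
have nd : nondegenerate eps x by split; [exact: r0 | exact: lt0r_neq0].
have [TT NN TN NT] := frame_products f0.
have [T0 N0] := (Tvec_uv_supported x, Nvec_uv_supported x).
split; last by split; [exact: wbarE | exact: box_wbar].
rewrite /P !bil_pibar_uv // TT NN TN NT !mulr0 /kbar -/k.
split; [by field | split; [by field | do 2 split => //]].
split=> [a b aY _|]; first by rewrite pibar_gbar // aY.
split=> [C D CZ _|]; first by rewrite pibar_gbar // isZ_isY.
split=> [i iYZ|a C aY CZ].
  by have [? ?] := bil_pibar_cvec nd T0 iYZ; have [? ?] := bil_pibar_cvec nd N0 iYZ.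
have aC : C != a by apply: contraTneq CZ => ->; move: aY; case: coordP.
by rewrite !pibar_off_partner // partner_id ?aY ?CZ ?orbT // eq_sym.
Qed.
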